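(* Let $n,m,L\ge1$, $\alpha\in(0,1)$, $\beta\ge0$, $\rho\ge0$, and let data matrices $H\in\mathbb R^{n\times L}$, $H^+\in\mathbb R^{n\times L}$, $\Xi\in\mathbb R^{m\times L}$ be given. Define $$N_1:=\begin{bmatrix} I_n & H^+\\ 0 & -H\\ 0 & -\Xi\\ 0&0\\0&0\end{bmatrix}\begin{bmatrix}\beta I_n & 0\\ 0 & -I_L\end{bmatrix}\begin{bmatrix} I_n & H^+\\ 0 & -H\\ 0 & -\Xi\\ 0&0\\0&0\end{bmatrix}^{\!\top},\qquad N_2:=\begin{bmatrix} I_n&0&0\\0&0&0\\0&0&0\\0&I_n&0\\0&0&I_m\end{bmatrix}\begin{bmatrix}\rho^2 I_n&0&0\\0&-I_n&0\\0&0&-I_m\end{bmatrix}\begin{bmatrix} I_n&0&0\\0&0&0\\0&0&0\\0&I_n&0\\0&0&I_m\end{bmatrix}^{\!\top},$$ where the block rows have sizes $n,n,m,n,m$ (zero blocks sized accordingly), and let $\widetilde N_j:=\operatorname{diag}(N_j,0_{n\times n})$, $j=1,2$. For $P\in\mathbb R^{n\times n}$ symmetric, $L_K\in\mathbb R^{m\times n}$ and $\nu>0$, define the symmetric block matrix (block sizes $n,n,m,n,m,n$) $$S(P,L_K,\nu)=\begin{bmatrix} \alpha P-\nu I & 0 & 0 & 0 & 0 & 0\\ 0 & -P & -L_K^\top & -P & -L_K^\top & 0\\ 0 & -L_K & 0 & -L_K & 0 & L_K\\ 0 & -P & -L_K^\top & -P & -L_K^\top & 0\\ 0 & -L_K &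 0 & -L_K & 0 & L_K\\ 0 & 0 & L_K^\top & 0 & L_K^\top & P \end{bmatrix}.$$ Suppose there exist $\lambda_1,\lambda_2\ge0$, $\nu>0$, a symmetric positive definite $P\in\mathbb R^{n\times n}$ and $L_K\in\mathbb R^{m\times n}$ such that $$S(P,L_K,\nu)-\lambda_1\widetilde N_1-\lambda_2\widetilde N_2\succ0,$$ and set $K:=L_KP^{-1}$. Then for every pair $(A,B)\in\mathbb R^{n\times n}\times\mathbb R^{n\times m}$ for which there exists $W\in\mathbb R^{n\times L}$ with $H^+=AH+B\Xi+W$ and $WW^\top\preceq\beta I_n$, and every pair $(\Delta A,\Delta B)\in\mathbb R^{n\times n}\times\mathbb R^{n\times m}$ with $\Delta A\Delta A^\top+\Delta B\Delta B^\top\preceq\rho^2 I_n$, the closed-loop matrix $A_{\rm cl}:=A+BK+\Delta A+\Delta B\,K$ satisfies $$\alpha P-A_{\rm cl}\,P\,A_{\rm cl}^\top\succ0 .$$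
   Context: $\succ,\succeq,\preceq$ denote the Loewner order on symmetric matrices; $I_k$ is the $k\times k$ identity. In the paper, $(H,H^+,\Xi)=(H_{i-1},H_{i-1}^+,\Xi_{i-1})$ are the deviation data matrices collected on the previous segment, $\beta=\beta_{i-1}$ is the aggregated disturbance-energy bound, and $\rho=C\widetilde T_i$ is the Jacobian-variation bound. *)

From HB Require Import structures.
From mathcomp Require Import all_boot all_order all_algebra.
From mathcomp Require Import reals.
Set Implicit Arguments. Unset Strict Implicit. Unset Printing Implicit Defensive.
Import Order.TTheory GRing.Theory Num.Theory.
Local Open Scope ring_scope.

Definition symmetric_mx (R : realType) k (M : 'M[R]_k) : Prop := M^T = M.

Definition posdef (R : realType) k (M : 'M[R]_k) : Prop :=
  symmetric_mx M /\ forall v : 'rV[R]_k, v != 0 -> 0 < (v *m M *m v^T) 0 0.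

Definition possemidef (R : realType) k (M : 'M[R]_k) : Prop :=
  symmetric_mx M /\ forall v : 'rV[R]_k, 0 <= (v *m M *m v^T) 0 0.

Definition loewner_le (R : realType) k (A B : 'M[R]_k) : Prop := possemidef (B - A).

(* Block structure: the five block rows n, n, m, n, m are nested as
   n + ((n + m) + (n + m)); the sixth block (size n) is appended on the right. *)
Definition dim5 (n m : nat) : nat := (n + ((n + m) + (n + m)))%N.

Definition N1 (R : realType) (n m L : nat) (beta : R)
  (H Hp : 'M[R]_(n, L)) (Xi : 'M[R]_(m, L)) : 'M[R]_(dim5 n m) :=
  let F : 'M[R]_(dim5 n m, n + L) :=
    col_mx (row_mx 1%:M Hp)
      (col_mx (col_mx (row_mx 0 (- H)) (row_mx 0 (- Xi))) 0) in
  let Mid : 'M[R]_(n + L) := block_mx (beta%:M) 0 0 (- 1%:M) in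
  F *m Mid *m F^T.

Definition N2 (R : realType) (n m : nat) (rho : R) : 'M[R]_(dim5 n m) :=
  let F : 'M[R]_(dim5 n m, n + (n + m)) :=
    col_mx (row_mx 1%:M 0) (col_mx 0 (row_mx 0 1%:M)) in
  let Mid : 'M[R]_(n + (n + m)) := block_mx ((rho ^+ 2)%:M) 0 0 (- 1%:M) in
  F *m Mid *m F^T.

Definition tilde (R : realType) (n m : nat) (N : 'M[R]_(dim5 n m))
  : 'M[R]_(dim5 n m + n) := block_mx N 0 0 0.

Definition Smat (R : realType) (n m : nat) (alpha : R)
  (P : 'M[R]_n) (LK : 'M[R]_(m, n)) (nu : R) : 'M[R]_(dim5 n m + n) :=
  let Q : 'M[R]_(n + m) := block_mx (- P) (- LK^T) (- LK) 0 in
  let S5 : 'M[R]_(dim5 n m) :=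
    block_mx (alpha *: P - nu%:M) 0 0 (block_mx Q Q Q Q) in
  let C : 'M[R]_(dim5 n m, n) :=
    col_mx 0 (col_mx (col_mx 0 LK) (col_mx 0 LK)) in
  block_mx S5 C C^T P.

From HB Require Import structures.
From mathcomp Require Import all_boot all_order all_algebra.
From mathcomp Require Import reals ring lra.
Set Implicit Arguments. Unset Strict Implicit. Unset Printing Implicit Defensive.
Import Order.TTheory GRing.Theory Num.Theory.
Local Open Scope ring_scope.

(* For a row vector v, stack x1 = vA, u1 = vB, x2 = vΔA, u2 = vΔB and
   x3 = -(u1 + u2)K into one vector z.
   Then the quadratic forms of N1 and N2 at z are nonnegative (they encode the
   data consistency and the Jacobian-variation bound), so the LMI forces
   z S z^T > 0 (S-procedure); and with this choice of x3 the Schur-type block of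
   S completes the square, z S z^T = v(αP - ν I)v^T - (v A_cl) P (v A_cl)^T. *)

Section QuadraticForms.

Variable R : realType.

Lemma gram_ge0 l (M : 'rV[R]_l) : 0 <= (M *m M^T) 0 0.
Proof. by rewrite mxE; apply: sumr_ge0 => i _; rewrite mxE -expr2 sqr_ge0. Qed.

Lemma posdef_unitmx k (P : 'M[R]_k) : posdef P -> P \in unitmx.
Proof.
move=> [_ Ppos]; rewrite unitmxE unitfE; apply/negP => /det0P [v v0 vP].
by have := Ppos v v0; rewrite vP mul0mx mxE ltxx.
Qed.

Lemma qform_gt0_S_procedure k (S N1 N2 : 'M[R]_k) (l1 l2 : R) (z : 'rV[R]_k) :
  0 <= l1 -> 0 <= l2 -> posdef (S - l1 *: N1 - l2 *: N2) -> z != 0 ->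
  0 <= (z *m N1 *m z^T) 0 0 -> 0 <= (z *m N2 *m z^T) 0 0 ->
  0 < (z *m S *m z^T) 0 0.
Proof.
move=> l1_ge0 l2_ge0 [_ LMI] z0 N1z N2z; have := LMI z z0.
rewrite !(mulmxBr, mulmxBl) -!scalemxAr -!scalemxAl.
move: N1z N2z; move: (z *m S *m z^T) (z *m N1 *m z^T) (z *m N2 *m z^T) => qS q1 q2.
rewrite !mxE => N1z N2z.
by have := mulr_ge0 l1_ge0 N1z; have := mulr_ge0 l2_ge0 N2z; lra.
Qed.

Lemma loewner_gram_qform_ge0 k l (M : 'M[R]_(k, l)) (c : R) (v : 'rV[R]_k) :
  loewner_le (M *m M^T) c%:M ->
  0 <= (c *: (v *m v^T) - (v *m M) *m (v *m M)^T) 0 0.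
Proof.
move=> [_ le_Mc]; have := le_Mc v.
by rewrite mulmxBr mulmxBl mul_mx_scalar -scalemxAl trmx_mul !mulmxA.
Qed.

Variables n m : nat.

Definition stack5 (v x1 : 'rV[R]_n) (u1 : 'rV[R]_m) (x2 : 'rV[R]_n)
  (u2 : 'rV[R]_m) : 'rV[R]_(dim5 n m) :=
  row_mx v (row_mx (row_mx x1 u1) (row_mx x2 u2)).

Lemma qform_tilde (N : 'M[R]_(dim5 n m)) (z : 'rV[R]_(dim5 n m)) (x3 : 'rV[R]_n) :
  row_mx z x3 *m tilde N *m (row_mx z x3)^T = z *m N *m z^T.
Proof.
rewrite /tilde (mul_row_block z) tr_row_mx mul_row_col.
by rewrite !mulmx0 !addr0 mul0mx addr0.
Qed.

Lemma qform_N1 L (beta : R) (H Hp : 'M[R]_(n, L)) (Xi : 'M[R]_(m, L))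
    (v x1 x2 : 'rV[R]_n) (u1 u2 : 'rV[R]_m) :
  let d := v *m Hp - x1 *m H - u1 *m Xi in
  stack5 v x1 u1 x2 u2 *m N1 beta H Hp Xi *m (stack5 v x1 u1 x2 u2)^T
  = beta *: (v *m v^T) - d *m d^T.
Proof.
move=> d; rewrite /N1 /=; set F := col_mx _ _.
rewrite !mulmxA -mulmxA -trmx_mul.
have -> : stack5 v x1 u1 x2 u2 *m F = row_mx v d.
  rewrite /F !(mul_row_col, mul_mx_row, add_row_mx, mulmx0, mul0mx, addr0, add0r, mulmx1).
  by rewrite /d !mulmxN addrA.
rewrite (mul_row_block v d) tr_row_mx mul_row_col.
by rewrite !mulmx0 addr0 add0r mul_mx_scalar mulmxN mulmx1 mulNmx -scalemxAl.
Qed.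

Lemma qform_N2 (rho : R) (v x1 x2 : 'rV[R]_n) (u1 u2 : 'rV[R]_m) :
  stack5 v x1 u1 x2 u2 *m N2 n m rho *m (stack5 v x1 u1 x2 u2)^T
  = rho ^+ 2 *: (v *m v^T) - row_mx x2 u2 *m (row_mx x2 u2)^T.
Proof.
rewrite /N2 /=; set F := col_mx _ _.
rewrite !mulmxA -mulmxA -trmx_mul.
have -> : stack5 v x1 u1 x2 u2 *m F = row_mx v (row_mx x2 u2).
  by rewrite /F !(mul_row_col, mul_mx_row, add_row_mx, mulmx0, mul0mx, addr0, add0r, mulmx1).
rewrite (mul_row_block v) !tr_row_mx !mul_row_col !mulmx0 addr0 add0r.
by rewrite mul_mx_scalar mulmxN mulmx1 mulNmx mul_row_col -scalemxAl.
Qed.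

Lemma qform_Smat (alpha nu : R) (P : 'M[R]_n) (LK : 'M[R]_(m, n))
    (v x1 x2 x3 : 'rV[R]_n) (u1 u2 : 'rV[R]_m) :
  let s := x1 + x2 in let t := u1 + u2 in
  row_mx (stack5 v x1 u1 x2 u2) x3 *m Smat alpha P LK nu
    *m (row_mx (stack5 v x1 u1 x2 u2) x3)^T =
  v *m (alpha *: P - nu%:M) *m v^T - s *m P *m s^T - t *m LK *m s^T
   - s *m LK^T *m t^T + t *m LK *m x3^T + x3 *m LK^T *m t^T + x3 *m P *m x3^T.
Proof.
move=> s t; rewrite /Smat /= (mul_row_block (stack5 _ _ _ _ _)) tr_row_mx mul_row_col.
rewrite !(mul_row_block, mul_row_col, tr_row_mx, tr_col_mx, mul_mx_row, add_row_mx,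
  mulmx0, mul0mx, addr0, add0r, mulmx1, trmx0).
rewrite /s /t !linearD /= !(mulmxDl, mulmxDr, mulmxN, mulNmx, mulmxA).
by apply/matrixP => i j; rewrite !ord1 !mxE; ring.
Qed.

Lemma qform_Smat_feedback (alpha nu : R) (P : 'M[R]_n) (LK K : 'M[R]_(m, n))
    (v x1 x2 : 'rV[R]_n) (u1 u2 : 'rV[R]_m) :
  P^T = P -> K *m P = LK ->
  let w := x1 + x2 + (u1 + u2) *m K in
  row_mx (stack5 v x1 u1 x2 u2) (- ((u1 + u2) *m K)) *m Smat alpha P LK nu
    *m (row_mx (stack5 v x1 u1 x2 u2) (- ((u1 + u2) *m K)))^T =
  v *m (alpha *: P - nu%:M) *m v^T - w *m P *m w^T.
Proof.
move=> Psym KP w; rewrite qform_Smat /w -KP trmx_mul Psym.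
move: (x1 + x2) (u1 + u2) => s t.
rewrite !(raddfN, raddfD, trmx_mul, mulmxDl, mulmxDr, mulmxN, mulNmx, mulmxA) /=.
rewrite !trmx_mul !(mulNmx, mulmxA).
by apply/matrixP => i j; rewrite !ord1 !mxE; ring.
Qed.

End QuadraticForms.

Theorem theorem1 (R : realType) (n m L : nat)
  (hn : (0 < n)%N) (hm : (0 < m)%N) (hL : (0 < L)%N)
  (alpha beta rho : R)
  (halpha0 : 0 < alpha) (halpha1 : alpha < 1) (hbeta : 0 <= beta) (hrho : 0 <= rho)
  (H Hp : 'M[R]_(n, L)) (Xi : 'M[R]_(m, L))
  (lambda1 lambda2 nu : R) (P : 'M[R]_n) (LK : 'M[R]_(m, n))
  (hl1 : 0 <= lambda1) (hl2 : 0 <= lambda2) (hnu : 0 < nu)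
  (hP : posdef P)
  (hLMI : posdef (Smat alpha P LK nu
                  - lambda1 *: tilde (N1 beta H Hp Xi)
                  - lambda2 *: tilde (N2 n m rho))) :
  let K : 'M[R]_(m, n) := LK *m invmx P in
  forall (A : 'M[R]_n) (B : 'M[R]_(n, m)),
    (exists W : 'M[R]_(n, L),
        Hp = A *m H + B *m Xi + W /\ loewner_le (W *m W^T) (beta%:M)) ->
  forall (dA : 'M[R]_n) (dB : 'M[R]_(n, m)),
    loewner_le (dA *m dA^T + dB *m dB^T) ((rho ^+ 2)%:M) ->
    let Acl := A + B *m K + dA + dB *m K in
    posdef (alpha *: P - Acl *m P *m Acl^T).
Proof.
move=> K A B [W [HpE hW]] dA dB hd Acl.
have Psym : P^T = P by case: hP.
have KP : K *m P = LK by rewrite -mulmxA mulVmx ?mulmx1 // posdef_unitmx.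
split; first by rewrite /symmetric_mx linearB linearZ /= !trmx_mul trmxK Psym mulmxA.
move=> v v0.
set x3 := - ((v *m B + v *m dB) *m K).
set z5 := stack5 v (v *m A) (v *m B) (v *m dA) (v *m dB).
have N1z : 0 <= (row_mx z5 x3 *m tilde (N1 beta H Hp Xi) *m (row_mx z5 x3)^T) 0 0.
  rewrite qform_tilde /z5 qform_N1 HpE !mulmxDr !mulmxA -addrA -opprD addrAC subrr add0r.
  exact: loewner_gram_qform_ge0.
have N2z : 0 <= (row_mx z5 x3 *m tilde (N2 n m rho) *m (row_mx z5 x3)^T) 0 0.
  rewrite qform_tilde /z5 qform_N2 -!mul_mx_row; apply: loewner_gram_qform_ge0.
  by rewrite tr_row_mx mul_row_col.
have z0 : row_mx z5 x3 != 0 by rewrite !row_mx_eq0 (negbTE v0).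
have := qform_gt0_S_procedure hl1 hl2 hLMI z0 N1z N2z.
rewrite /x3 /z5 qform_Smat_feedback //.
have -> : v *m A + v *m dA + (v *m B + v *m dB) *m K = v *m Acl.
  by rewrite /Acl mulmxDl !mulmxDr !mulmxA addrACA !addrA.
rewrite !mulmxBr !mulmxBl !trmx_mul !mulmxA mul_mx_scalar -scalemxAl.
have := gram_ge0 v.
move: (v *m v^T) (v *m (alpha *: P) *m v^T) (v *m Acl *m P *m Acl^T *m v^T) => vv vPv wPw.
rewrite !mxE => vv_ge0.
by have := mulr_ge0 (ltW hnu) vv_ge0; lra.
Qed.
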